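(* Let $A$ be an archimedean $*$-algebra, $x\in A_+$, and $\bar x$ its image in $C^*(A)$. Then $\bar x$ is invertible in $C^*(A)$ if and only if there exists a positive rational $\alpha$ with $x-\alpha\in A_+$.
   Context: A $*$-algebra is a unital algebra over $\mathbb{Q}$ with a $\mathbb{Q}$-linear involution $x\mapsto x^*$ satisfying $(xy)^*=y^*x^*$; rational scalars are identified with multiples of the unit. $A_+=\{\sum_{i=1}^n x_i^*x_i: n\in\mathbb{N},x_i\in A\}$, and $x\leq y$ means $y-x\in A_+$. For $x\in A$, $\|x\|=\sqrt{\inf\{\alpha\in\mathbb{Q}_{>0}: x^*x\leq\alpha\}}\in[0,\infty]$; $A_i=\{x:\|x\|=0\}$. $A$ is archimedean if $-1\notin A_+$ and $\|x\|<\infty$ for all $x$. $C^*(A)=\mathbb{C}\otimes_{\mathbb{R}}C^*_{\mathbb{R}}(A)$, where $C^*_{\mathbb{R}}(A)$ is the completion of $A/A_i$ with respect to the norm induced by $\|\cdot\|$. *)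

From HB Require Import structures.
From mathcomp Require Import all_boot all_order all_algebra.
Set Implicit Arguments. Unset Strict Implicit. Unset Printing Implicit Defensive.
Import Order.TTheory GRing.Theory Num.Theory.
Local Open Scope ring_scope.

Section StarAlg.
Variable A : algType rat.
Variable st : A -> A.

Record star_alg : Prop := {
  star_linear : forall (a : rat) (x y : A), st (a *: x + y) = a *: st x + st y;
  star_invol : forall x, st (st x) = x;
  star_mul : forall x y, st (x * y) = st y * st x }.

Definition pos_cone (a : A) : Prop :=
  exists s : seq A, a = \sum_(y <- s) st y * y.

Definition sle (x y : A) : Prop := pos_cone (y - x).

Definition norm_bound (x : A) (alpha : rat) : Prop :=
  0 < alpha /\ sle (st x * x) alpha%:A.

(* ||x|| < e  (for rational e > 0): inf{alpha | x^*x <= alpha} < e^2 *)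
Definition norm_lt (x : A) (e : rat) : Prop :=
  exists alpha, norm_bound x alpha /\ alpha < e ^+ 2.

Definition archimedean : Prop :=
  ~ pos_cone (-1) /\ forall x, exists alpha, norm_bound x alpha.

(* Completion C*_R(A) of A/A_i: Cauchy sequences modulo null sequences. *)
Definition cauchy (u : nat -> A) : Prop :=
  forall e : rat, 0 < e -> exists N : nat, forall m n : nat,
    (N <= m)%N -> (N <= n)%N -> norm_lt (u m - u n) e.

Definition null_seq (u : nat -> A) : Prop :=
  forall e : rat, 0 < e -> exists N : nat, forall n : nat,
    (N <= n)%N -> norm_lt (u n) e.

Definition ceq (u v : nat -> A) : Prop := null_seq (fun n => u n - v n).

(* C*(A) = C (x)_R C*_R(A): pairs (re, im) of elements of C*_R(A). *)
Definition cpair := ((nat -> A) * (nat -> A))%type.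

Definition Cstar_elt (p : cpair) : Prop := cauchy p.1 /\ cauchy p.2.

Definition Cstar_eq (p q : cpair) : Prop := ceq p.1 q.1 /\ ceq p.2 q.2.

Definition Cstar_mul (p q : cpair) : cpair :=
  (fun n => p.1 n * q.1 n - p.2 n * q.2 n,
   fun n => p.1 n * q.2 n + p.2 n * q.1 n).

Definition Cstar_img (x : A) : cpair := (fun _ => x, fun _ => 0).

Definition Cstar_invertible (p : cpair) : Prop :=
  exists q, Cstar_elt q /\ Cstar_eq (Cstar_mul p q) (Cstar_img 1)
                        /\ Cstar_eq (Cstar_mul q p) (Cstar_img 1).

End StarAlg.

(* Every x in A_+ satisfies 0 <= x <= be for a rational be, and on polynomials
   in x positivity is preserved by sums, nonnegative scalings and conjugations
   q p q; this is enough to compare powers of x.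
   If x >= al > 0, write x = be (1 - y) with 0 <= y <= r < 1.  Then
   0 <= y^k <= r^k, so the Neumann partial sums be^-1 (1 + y + ... + y^(n-1))
   form a Cauchy sequence whose product with x is 1 - y^n, and y^n -> 0.
   Conversely, if ||u x - 1||^2 <= a < 1/2 and ||u||^2 <= M, the parallelogram
   law for u x and u x - 1 gives 1 <= 2 (x u* u x + a) <= 2 (M x^2 + a); as
   x^2 <= be x, this yields x >= (1 - 2 a) / (2 M be). *)

From HB Require Import structures.
From mathcomp Require Import all_boot all_order all_algebra.
From mathcomp Require Import ring lra.
Set Implicit Arguments. Unset Strict Implicit. Unset Printing Implicit Defensive.
Import Order.TTheory GRing.Theory Num.Theory.
Local Open Scope ring_scope.

Section Geometric.
Variable R : archiRealFieldType.

Lemma exprn_bernoulli (r : R) n : 0 <= r <= 1 -> r ^+ n * (1 + n%:R * (1 - r)) <= 1.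
Proof.
case/andP=> r_ge0 r_le1; elim: n => [|n IH]; first by rewrite expr0 mul0r addr0 mulr1.
have rn_ge0 : 0 <= r ^+ n by apply: exprn_ge0.
have rn_le1 : r ^+ n <= 1 by apply: exprn_ile1.
have := ler_wpM2l r_ge0 IH.
have : r * r ^+ n * (1 - r) <= 1 - r by rewrite ler_piMl ?subr_ge0 // mulr_ile1.
rewrite exprS mulrS; lra.
Qed.

Lemma exprn_eventually_lt (r e : R) : 0 <= r < 1 -> 0 < e -> exists N, r ^+ N < e.
Proof.
case/andP=> r_ge0 r_lt1 e_gt0.
have et_gt0 : 0 < e * (1 - r) by rewrite mulr_gt0 ?subr_gt0.
pose N := Num.Def.archi_bound (e * (1 - r))^-1; exists N.
have : (e * (1 - r))^-1 < N%:R by rewrite archi_boundP // invr_ge0 ltW.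
rewrite -(ltr_pM2l et_gt0) mulfV ?lt0r_neq0 // => lt1.
have bern : r ^+ N * (1 + N%:R * (1 - r)) <= 1 by rewrite exprn_bernoulli // r_ge0 ltW.
have t_ge0 : 0 <= N%:R * (1 - r) by rewrite mulr_ge0 ?ler0n // subr_ge0 ltW.
rewrite ltNge; apply/negP => /(ler_wpM2r t_ge0).
by move: (exprn_ge0 N r_ge0); clear -lt1 bern; lra.
Qed.

Lemma geometric_eventually_lt (c r e : R) : 0 < c -> 0 <= r < 1 -> 0 < e ->
  exists N, forall n, (N <= n)%N -> c * r ^+ n < e.
Proof.
move=> c_gt0 r01 e_gt0; case/andP: (r01) => r_ge0 r_lt1.
have [N ltN] := exprn_eventually_lt r01 (divr_gt0 e_gt0 c_gt0).
exists N => n le_Nn; rewrite mulrC -ltr_pdivlMr //.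
by apply: le_lt_trans ltN; rewrite ler_wiXn2l // ltW.
Qed.

Lemma subr_geometric_sum (r : R) n m : (n <= m)%N ->
  (1 - r) * \sum_(n <= k < m) r ^+ k = r ^+ n - r ^+ m.
Proof.
move=> /subnKC <-; elim: (m - n)%N => [|d IH].
  by rewrite addn0 big_geq // mulr0 subrr.
by rewrite addnS big_nat_recr ?leq_addr //= mulrDr IH exprS mulrBl mul1r addrA subrK.
Qed.

Lemma geometric_sum_le (r : R) n m : 0 <= r < 1 ->
  \sum_(n <= k < m) r ^+ k <= r ^+ n / (1 - r).
Proof.
case/andP=> r_ge0 r_lt1; have t_gt0 : 0 < 1 - r by rewrite subr_gt0.
rewrite ler_pdivlMr // mulrC; case: (leqP n m) => [le_nm | lt_mn].
  by rewrite subr_geometric_sum // lerBlDr lerDl exprn_ge0.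
by rewrite big_geq ?(ltnW lt_mn) // mulr0 exprn_ge0.
Qed.

End Geometric.

Lemma exprn_half_odd (R : pzSemiRingType) (y : R) k :
  y ^+ k = y ^+ k./2 * y ^+ odd k * y ^+ k./2.
Proof. by rewrite -!exprD addnAC addnn addnC odd_double_half. Qed.

Section StarAlgebra.
Variables (A : algType rat) (st : A -> A).
Hypothesis hst : star_alg st.

Local Notation pos := (pos_cone st).

Lemma starD x y : st (x + y) = st x + st y.
Proof. by have := star_linear hst 1 x y; rewrite !scale1r. Qed.

Lemma star0 : st 0 = 0.
Proof. by apply: (@addrI _ (st 0)); rewrite -starD !addr0. Qed.

Lemma starZ (c : rat) x : st (c *: x) = c *: st x.
Proof. by have := star_linear hst c x 0; rewrite !addr0 star0 addr0. Qed.

Lemma starN x : st (- x) = - st x.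
Proof. by rewrite -scaleN1r starZ scaleN1r. Qed.

Lemma starB x y : st (x - y) = st x - st y.
Proof. by rewrite starD starN. Qed.

Lemma starM x y : st (x * y) = st y * st x.
Proof. exact: star_mul. Qed.

Lemma star1 : st 1 = 1.
Proof. by have := starM 1 (st 1); rewrite mul1r (star_invol hst) mul1r => /esym. Qed.

Lemma star_scalar (c : rat) : st c%:A = c%:A.
Proof. by rewrite starZ star1. Qed.

Lemma star_parallelogram a b :
  st (a - b) * (a - b) + st (a + b) * (a + b) = (st a * a + st b * b) *+ 2.
Proof.
rewrite starB starD mulrBl !mulrBr mulrDl !mulrDr.
rewrite opprB addrACA [st b * a + _]addrC [X in X + _]addrACA [X in _ + X]addrACA.
by rewrite !addNr !addr0 mulr2n addrACA.
Qed.

Lemma pos_cone0 : pos 0.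
Proof. by exists [::]; rewrite big_nil. Qed.

Lemma pos_coneD a b : pos a -> pos b -> pos (a + b).
Proof. by move=> [s ->] [t ->]; exists (s ++ t); rewrite big_cat. Qed.

Lemma pos_coneMn a k : pos a -> pos (a *+ k).
Proof.
move=> ha; elim: k => [|k IH]; first by rewrite mulr0n; exact: pos_cone0.
by rewrite mulrS; apply: pos_coneD.
Qed.

Lemma pos_cone_norm a : pos (st a * a).
Proof. by exists [:: a]; rewrite big_seq1. Qed.

Lemma pos_cone_conj b a : pos a -> pos (st b * a * b).
Proof.
move=> [s ->]; exists [seq y * b | y <- s].
rewrite big_map mulr_sumr mulr_suml; apply: eq_bigr => y _.
by rewrite starM !mulrA.
Qed.

Lemma pos_cone_sqrZ (t : rat) a : pos a -> pos ((t * t) *: a).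
Proof.
move=> [s ->]; exists [seq t *: y | y <- s].
rewrite big_map scaler_sumr; apply: eq_bigr => y _.
by rewrite starZ -scalerAl -scalerAr scalerA.
Qed.

Lemma pos_coneZ (c : rat) a : 0 <= c -> pos a -> pos (c *: a).
Proof.
move=> c_ge0 ha; set d : rat := (denq c)%:~R.
have d_neq0 : d != 0 by rewrite intr_eq0 denq_neq0.
(* [numq c * denq c] is a natural number *)
have -> : c = (absz (numq c * denq c))%:R * (d^-1 * d^-1).
  rewrite natr_absz ger0_norm; last by rewrite mulr_ge0 ?numq_ge0 // ltW ?denq_gt0.
  by rewrite intrM -{1}(divq_num_den c) -/d; field.
by rewrite -scalerA scaler_nat; apply/pos_coneMn/pos_cone_sqrZ.
Qed.

Lemma pos_cone_scalar (c : rat) : 0 <= c -> pos c%:A.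
Proof. by move=> c_ge0; rewrite -[1]mulr1 -{1}star1; apply/pos_coneZ/pos_cone_norm. Qed.

Lemma pos_cone_herm a : pos a -> st a = a.
Proof.
move=> [s ->]; rewrite (big_morph st starD star0); apply: eq_bigr => y _.
by rewrite starM (star_invol hst).
Qed.

Lemma sle_trans a b c : sle st a b -> sle st b c -> sle st a c.
Proof. by move=> hab hbc; rewrite /sle -(subrK b c) -addrA; apply: pos_coneD. Qed.

Lemma sleD a b c d : sle st a b -> sle st c d -> sle st (a + c) (b + d).
Proof. by rewrite /sle opprD addrACA; apply: pos_coneD. Qed.

Lemma sleMn a b k : sle st a b -> sle st (a *+ k) (b *+ k).
Proof. by rewrite /sle -mulrnBl; apply: pos_coneMn. Qed.

Lemma sle_conj c a b : sle st a b -> sle st (st c * a * c) (st c * b * c).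
Proof. by rewrite /sle -mulrBl -mulrBr; apply: pos_cone_conj. Qed.

Lemma norm_boundN a al : norm_bound st (- a) al = norm_bound st a al.
Proof. by rewrite /norm_bound /sle starN mulrNN. Qed.

Lemma norm_lt_of_bound a c e :
  0 <= c -> c < e -> norm_bound st a (c ^+ 2) -> norm_lt st a e.
Proof. by move=> c_ge0 lt_ce hb; exists (c ^+ 2); rewrite ltrXn2r. Qed.

Lemma eq_null_seq u v : (forall n, u n = v n) -> null_seq st u -> null_seq st v.
Proof. by move=> euv hu e /hu[N hN]; exists N => n; rewrite -euv; apply: hN. Qed.

Lemma null_seqN u : null_seq st u -> null_seq st (fun n => - u n).
Proof.
move=> hu e /hu[N hN]; exists N => n /hN[al [hb lt_al]].
by exists al; rewrite norm_boundN.
Qed.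

Lemma null_seq0 : null_seq st (fun _ => 0).
Proof.
move=> e e_gt0; exists 0%N => _ _; apply: (@norm_lt_of_bound _ (e / 2)).
- by rewrite divr_ge0 ?ltW.
- by rewrite ltr_pdivrMr // ltr_pMr // ltr1n.
split; first by rewrite exprn_gt0 ?divr_gt0.
by rewrite /sle star0 mul0r subr0; apply/pos_cone_scalar/exprn_ge0/divr_ge0/ler0n/ltW.
Qed.

Lemma cauchy0 : cauchy st (fun _ => 0).
Proof. by move=> e /null_seq0[N hN]; exists N => m n hm _; rewrite subr0; apply: hN. Qed.

Lemma null_seq_geometric u (c r : rat) : 0 < c -> 0 <= r < 1 ->
  (forall n, norm_bound st (u n) ((c * r ^+ n) ^+ 2)) -> null_seq st u.
Proof.
move=> c_gt0 r01 hu e e_gt0.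
have [N hN] := geometric_eventually_lt c_gt0 r01 e_gt0.
have r_ge0 : 0 <= r by case/andP: r01.
exists N => n /hN lt_e; apply: norm_lt_of_bound lt_e (hu n).
by rewrite mulr_ge0 ?exprn_ge0 // ltW.
Qed.

Lemma cauchy_geometric u (c r : rat) : 0 < c -> 0 <= r < 1 ->
  (forall n m, (n <= m)%N -> norm_bound st (u m - u n) ((c * r ^+ n) ^+ 2)) ->
  cauchy st u.
Proof.
move=> c_gt0 r01 hu e e_gt0.
have [N hN] := geometric_eventually_lt c_gt0 r01 e_gt0.
have r_ge0 : 0 <= r by case/andP: r01.
have cr_ge0 n : 0 <= c * r ^+ n by rewrite mulr_ge0 ?exprn_ge0 // ltW.
exists N => m n hm hn; case: (leqP n m) => [le_nm | /ltnW le_mn].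
  exact: norm_lt_of_bound (cr_ge0 n) (hN n hn) (hu n m le_nm).
by apply: norm_lt_of_bound (cr_ge0 m) (hN m hm) _; rewrite -opprB norm_boundN; apply: hu.
Qed.

Lemma Cstar_invertible_img x u : cauchy st u ->
  null_seq st (fun n => 1 - x * u n) -> (forall n, u n * x = x * u n) ->
  Cstar_invertible st (Cstar_img x).
Proof.
move=> u_cauchy u_inv ux_comm.
have xu_inv := eq_null_seq (fun n => opprB _ _) (null_seqN u_inv).
have null0 := null_seq0.
exists (u, fun _ => 0); split; first by split; [exact: u_cauchy | exact: cauchy0].
split; split => /=.
- by apply: eq_null_seq xu_inv => n; rewrite mulr0 subr0.
- by apply: eq_null_seq null0 => n; rewrite mulr0 mul0r subr0 addr0.
- by apply: eq_null_seq xu_inv => n; rewrite mulr0 subr0 ux_comm.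
- by apply: eq_null_seq null0 => n; rewrite mulr0 mul0r subr0 addr0.
Qed.

Definition pos_at (x : A) (p : {poly rat}) := pos (horner_alg x p).

Section HermitianCalculus.
Variable x : A.
Hypothesis x_herm : st x = x.

Local Notation pos_at := (pos_at x).

Lemma horner_alg_mulC p q : horner_alg x p * horner_alg x q = horner_alg x q * horner_alg x p.
Proof. by rewrite -!rmorphM mulrC. Qed.

Lemma star_horner_alg p : st (horner_alg x p) = horner_alg x p.
Proof.
elim/poly_ind: p => [|p c IH]; first by rewrite rmorph0 star0.
rewrite rmorphD rmorphM /= horner_algX horner_algC starD starM star_scalar IH x_herm.
by rewrite -{1}(horner_algX x) horner_alg_mulC horner_algX.
Qed.

Lemma pos_atD p q : pos_at p -> pos_at q -> pos_at (p + q).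
Proof. by rewrite /pos_at rmorphD; apply: pos_coneD. Qed.

Lemma pos_atZ c p : 0 <= c -> pos_at p -> pos_at (c%:P * p).
Proof. by rewrite /pos_at rmorphM /= horner_algC mulr_algl; apply: pos_coneZ. Qed.

Lemma pos_atC c : 0 <= c -> pos_at c%:P.
Proof. by rewrite /pos_at horner_algC; apply: pos_cone_scalar. Qed.

Lemma pos_at_conj q p : pos_at p -> pos_at (q * p * q).
Proof. by rewrite /pos_at !rmorphM /= -{1}(star_horner_alg q); apply: pos_cone_conj. Qed.

Lemma pos_atZ_inv c p : 0 < c -> pos_at (c%:P * p) -> pos_at p.
Proof.
move=> c_gt0; have cV_ge0 : 0 <= c^-1 by rewrite invr_ge0 ltW.
move=> /(pos_atZ cV_ge0).
by rewrite mulrA -polyCM mulVf ?gt_eqF // mul1r.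
Qed.

Lemma pos_at_exp y k : pos_at y -> pos_at (y ^+ k).
Proof.
move=> y_pos; rewrite exprn_half_odd.
by apply: pos_at_conj; case: (odd k); rewrite ?expr1 ?expr0 //; apply: pos_atC.
Qed.

Lemma pos_at_mul_sub c h : 0 < c -> pos_at h -> pos_at (c%:P - h) ->
  pos_at (c%:P * h - h ^+ 2).
Proof.
move=> c_gt0 h_pos ch_pos; apply: (pos_atZ_inv c_gt0).
have -> : c%:P * (c%:P * h - h ^+ 2) = h * (c%:P - h) * h + (c%:P - h) * h * (c%:P - h).
  by ring.
by apply: pos_atD; apply: pos_at_conj.
Qed.

Lemma pos_at_sqr_le c h : 0 < c -> pos_at h -> pos_at (c%:P - h) ->
  pos_at ((c ^+ 2)%:P - h ^+ 2).
Proof.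
move=> c_gt0 h_pos ch_pos.
have -> : (c ^+ 2)%:P - h ^+ 2 = c%:P * (c%:P - h) + (c%:P * h - h ^+ 2).
  by rewrite rmorphXn /=; ring.
by apply: pos_atD; [apply: pos_atZ; rewrite ?ltW | apply: pos_at_mul_sub].
Qed.

Lemma pos_at_exp_mul_sub r y k : 0 < r -> pos_at y -> pos_at (r%:P - y) ->
  pos_at (y ^+ k * (r%:P - y)).
Proof.
move=> r_gt0 y_pos ry_pos.
rewrite {1}exprn_half_odd mulrAC -[_ * _ * (r%:P - y)]mulrA.
apply: pos_at_conj; case: (odd k); rewrite ?expr1 ?expr0 ?mul1r //.
by rewrite mulrBr mulrC -expr2; apply: pos_at_mul_sub.
Qed.

Lemma pos_at_exp_le r y k : 0 < r -> pos_at y -> pos_at (r%:P - y) ->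
  pos_at ((r ^+ k)%:P - y ^+ k).
Proof.
move=> r_gt0 y_pos ry_pos; elim: k => [|k IH]; first by rewrite subrr; apply: pos_atC.
have -> : (r ^+ k.+1)%:P - y ^+ k.+1 = r%:P * ((r ^+ k)%:P - y ^+ k) + y ^+ k * (r%:P - y).
  by rewrite !exprS polyCM; ring.
by apply: pos_atD; [apply: pos_atZ; rewrite ?ltW | apply: pos_at_exp_mul_sub].
Qed.

Lemma norm_bound_horner_alg c h : 0 < c -> pos_at h -> pos_at (c%:P - h) ->
  norm_bound st (horner_alg x h) (c ^+ 2).
Proof.
move=> c_gt0 h_pos ch_pos; split; first exact: exprn_gt0.
rewrite /sle star_horner_alg -rmorphM -(horner_algC x) -rmorphB -expr2.
exact: pos_at_sqr_le.
Qed.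

Lemma pos_at_le_scalar b : norm_bound st x b ->
  exists2 be, 0 < be & pos_at (be%:P - 'X).
Proof.
move=> [b_gt0 hb]; exists ((1 + b) / 2); first by rewrite divr_gt0 ?addr_gt0.
apply: (@pos_atZ_inv 2) => //.
have -> : 2%:P * (((1 + b) / 2)%:P - 'X) = (b%:P - 'X ^+ 2) + (1 - 'X) * 1 * (1 - 'X).
  by rewrite mulrBr -polyCM (mulrC 2) divfK ?pnatr_eq0 // polyCD polyC1 polyC_natr; ring.
apply: pos_atD; last by apply/pos_at_conj/pos_atC.
by move: hb; rewrite /sle /pos_at x_herm rmorphB rmorphXn /= horner_algC horner_algX expr2.
Qed.

Lemma null_seq_exp y r : 0 < r -> r < 1 -> pos_at y -> pos_at (r%:P - y) ->
  null_seq st (fun n => horner_alg x (y ^+ n)).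
Proof.
move=> r_gt0 r_lt1 y_pos ry_pos; apply: (@null_seq_geometric _ 1 r) => //.
  by rewrite ltW.
move=> n; rewrite mul1r; apply: norm_bound_horner_alg.
- exact: exprn_gt0.
- exact: pos_at_exp.
- exact: pos_at_exp_le.
Qed.

Lemma cauchy_neumann c y r : 0 < c -> 0 < r -> r < 1 -> pos_at y -> pos_at (r%:P - y) ->
  cauchy st (fun n => horner_alg x (c%:P * \sum_(k < n) y ^+ k)).
Proof.
move=> c_gt0 r_gt0 r_lt1 y_pos ry_pos.
have r01 : 0 <= r < 1 by rewrite ltW.
have t_gt0 : 0 < 1 - r by rewrite subr_gt0.
apply: (@cauchy_geometric _ (c / (1 - r)) r) => // [|n m le_nm].
  by rewrite divr_gt0.
rewrite -rmorphB -mulrBr -!(big_mkord xpredT (fun k => y ^+ k)).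
rewrite (big_cat_nat (leq0n n) le_nm) /= addrC addrK.
have sum_pos (F : nat -> {poly rat}) : (forall k, pos_at (F k)) ->
    pos_at (\sum_(n <= k < m) F k).
  by move=> F_pos; apply: (big_ind pos_at) => //; [exact: pos_atC | exact: pos_atD].
apply: norm_bound_horner_alg; first by rewrite mulr_gt0 ?divr_gt0 ?exprn_gt0.
  by apply: pos_atZ; [exact: ltW | apply: sum_pos => k; exact: pos_at_exp].
have -> : (c / (1 - r) * r ^+ n)%:P - c%:P * \sum_(n <= k < m) y ^+ k =
    c%:P * ((r ^+ n / (1 - r) - \sum_(n <= k < m) r ^+ k)%:P +
            \sum_(n <= k < m) ((r ^+ k)%:P - y ^+ k)).
  by rewrite mulrAC -mulrA polyCM rmorphB raddf_sum sumrB /=; ring.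
apply: pos_atZ; first exact: ltW.
apply: pos_atD; first by apply: pos_atC; rewrite subr_ge0 geometric_sum_le.
by apply: sum_pos => k; exact: pos_at_exp_le.
Qed.

Lemma pos_at_X_sub_of_sqr_ge c d be : 0 < c -> 0 < be -> pos_at 'X ->
  pos_at (be%:P - 'X) -> pos_at (c%:P * 'X ^+ 2 - d%:P) ->
  pos_at ('X - (d / (c * be))%:P).
Proof.
move=> c_gt0 be_gt0 X_pos le_be sqr_ge.
have cbe_gt0 : 0 < c * be by rewrite mulr_gt0.
apply: (pos_atZ_inv cbe_gt0).
have -> : (c * be)%:P * ('X - (d / (c * be))%:P) =
    c%:P * (be%:P * 'X - 'X ^+ 2) + (c%:P * 'X ^+ 2 - d%:P).
  by rewrite mulrBr -polyCM [(c * be) * _]mulrC divfK ?gt_eqF // polyCM; ring.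
apply: pos_atD => //; apply: pos_atZ; first exact: ltW.
exact: pos_at_mul_sub.
Qed.

End HermitianCalculus.

Lemma approx_inverse_lower_bound x u M aw : st x = x ->
  sle st (st u * u) M%:A -> sle st (st (u * x - 1) * (u * x - 1)) aw%:A ->
  sle st 1 ((M *: (x * x) + aw%:A) *+ 2).
Proof.
move=> x_herm hu hw; set w := u * x - 1 in hw *.
have one_le : sle st 1 ((st (u * x) * (u * x) + st w * w) *+ 2).
  rewrite /sle -star_parallelogram (_ : u * x - w = 1); last first.
    by rewrite /w opprB addrC subrK.
  by rewrite star1 mul1r addrAC subrr add0r; apply: pos_cone_norm.
apply: (sle_trans one_le); apply/sleMn/sleD => //.
have -> : st (u * x) * (u * x) = st x * (st u * u) * x by rewrite starM x_herm !mulrA.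
have -> : M *: (x * x) = st x * M%:A * x by rewrite x_herm mulr_algr scalerAl.
exact: sle_conj.
Qed.

Lemma pos_sub_scalar_of_approx_inverse x u M aw : pos x ->
  (exists b, norm_bound st x b) -> norm_bound st u M ->
  norm_bound st (u * x - 1) aw -> aw < 2^-1 ->
  exists al : rat, 0 < al /\ pos (x - al%:A).
Proof.
move=> x_pos [b hb] [M_gt0 hu] [_ hw] aw_lt.
have x_herm := pos_cone_herm x_pos.
have [be be_gt0 x_le] := pos_at_le_scalar x_herm hb.
have sqr_ge : pos_at x ((M *+ 2)%:P * 'X ^+ 2 - (1 - aw *+ 2)%:P).
  rewrite /pos_at rmorphB rmorphM rmorphXn /= !horner_algC horner_algX mulr_algl.
  have -> : (M *+ 2) *: (x ^+ 2) - (1 - aw *+ 2)%:A = (M *: (x * x) + aw%:A) *+ 2 - 1.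
    by rewrite expr2 scalerBl scale1r -!scalerMnl mulrnDl opprB addrA.
  exact: approx_inverse_lower_bound x_herm hu hw.
have X_pos : pos_at x 'X by rewrite /pos_at horner_algX.
have := pos_at_X_sub_of_sqr_ge x_herm _ be_gt0 X_pos x_le sqr_ge.
rewrite /pos_at rmorphB /= horner_algX horner_algC => /(_ (mulrn_wgt0 2 M_gt0)) x_ge.
exists ((1 - aw *+ 2) / (M *+ 2 * be)); split => //.
by rewrite divr_gt0 ?mulr_gt0 ?mulrn_wgt0 // subr_gt0 -mulr_natr -ltr_pdivlMr.
Qed.

Lemma Cstar_invertible_img_of_pos_sub x (al : rat) : pos x ->
  (exists b, norm_bound st x b) -> 0 < al -> pos (x - al%:A) ->
  Cstar_invertible st (Cstar_img x).
Proof.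
move=> x_pos [b hb] al_gt0 x_ge.
have x_herm := pos_cone_herm x_pos.
have [be be_gt0 x_le] := pos_at_le_scalar x_herm hb.
have al_be_gt0 : 0 < al + be by rewrite addr_gt0.
(* [x = be (1 - y)] with [0 <= y <= r < 1]; this [r] exceeds [1 - al / be]
   and is positive without comparing [al] with [be]. *)
pose r := be / (al + be); pose y := 1 - (be^-1)%:P * 'X.
have r_gt0 : 0 < r by rewrite divr_gt0.
have r_lt1 : r < 1 by rewrite ltr_pdivrMr // mul1r ltrDr.
have beV_ge0 : 0 <= be^-1 by rewrite invr_ge0 ltW.
have y_pos : pos_at x y.
  have -> : y = (be^-1)%:P * (be%:P - 'X).
    by rewrite mulrBr -polyCM mulVf ?gt_eqF // polyC1.
  exact: pos_atZ.
have ry_pos : pos_at x (r%:P - y).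
  have -> : r%:P - y = (be^-1)%:P * ('X - al%:P) + (al ^+ 2 / (be * (al + be)))%:P.
    have -> : r = 1 - be^-1 * al + al ^+ 2 / (be * (al + be)).
      by rewrite /r; field; rewrite !gt_eqF.
    by rewrite /y !(rmorphD, rmorphB, polyCM) /= polyC1; ring.
  apply: pos_atD; last by apply: pos_atC; rewrite divr_ge0 ?exprn_ge0 ?mulr_ge0 ?ltW.
  by apply: pos_atZ; rewrite // /pos_at rmorphB /= horner_algX horner_algC.
pose u n := horner_alg x ((be^-1)%:P * \sum_(k < n) y ^+ k).
apply: (Cstar_invertible_img (u := u)).
- by apply: (cauchy_neumann x_herm _ r_gt0 r_lt1 y_pos ry_pos); rewrite invr_gt0.
- apply: eq_null_seq (null_seq_exp x_herm r_gt0 r_lt1 y_pos ry_pos) => n.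
  have -> : y ^+ n = 1 - 'X * ((be^-1)%:P * \sum_(k < n) y ^+ k).
    by rewrite -[y ^+ n](subrK 1) subrX1 /y; ring.
  by rewrite rmorphB rmorphM /= rmorph1 horner_algX.
- move=> n; have := horner_alg_mulC x ((be^-1)%:P * \sum_(k < n) y ^+ k) 'X.
  by rewrite horner_algX.
Qed.

End StarAlgebra.

Theorem proposition2p9 (A : algType rat) (st : A -> A)
  (hst : star_alg st) (harch : archimedean st) (x : A) (hx : pos_cone st x) :
  Cstar_invertible st (Cstar_img x) <->
  exists alpha : rat, 0 < alpha /\ pos_cone st (x - alpha%:A).
Proof.
have bounded := harch.2.
split => [[q [_ [_ [left_inv _]]]] | [al [al_gt0 x_ge]]]; last first.
  by apply: (Cstar_invertible_img_of_pos_sub hst hx (bounded x) al_gt0).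
have [N hN] := left_inv (2^-1) isT.
have [aw [haw aw_lt]] := hN N (leqnn N).
have [M hM] := bounded (q.1 N).
apply: (pos_sub_scalar_of_approx_inverse hst hx (bounded x) hM (aw := aw)).
- by move: haw => /=; rewrite mulr0 subr0.
- exact: lt_trans aw_lt _.
Qed.
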